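(* Let $F$ be a $2$-edge-coloured graph on $n \geq 2$ vertices such that $d^R(v) \geq \log_2 n$ and $d^B(v) \geq \log_2 n$ for every vertex $v \in V(F)$. Then $F$ contains an alternating cycle.
   Context: A $2$-edge-coloured graph is a finite simple graph each of whose edges is coloured red or blue. For a vertex $v$, $d^R(v)$ (resp. $d^B(v)$) is the number of red (resp. blue) edges incident to $v$. An alternating cycle is a cycle (in the graph-theoretic sense, with distinct vertices) whose consecutive edges have alternating colours. *)

From mathcomp Require Import all_boot.
Set Implicit Arguments. Unset Strict Implicit. Unset Printing Implicit Defensive.

Definition two_edge_coloured (T : finType) (red blue : rel T) : Prop :=
  [/\ symmetric red, symmetric blue, irreflexive red, irreflexive blue
    & forall x y, ~~ (red x y && blue x y)].

Definition degR (T : finType) (red : rel T) (v : T) : nat := #|[set u | red v u]|.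
Definition degB (T : finType) (blue : rel T) (v : T) : nat := #|[set u | blue v u]|.

(* An alternating cycle: a duplicate-free sequence c = [c_0; ...; c_{m-1}]
   of m >= 3 vertices such that the edges c_i c_{i+1 mod m} exist, and
   consecutive edges (cyclically) have different colours; concretely edge i
   is red for even i and blue for odd i (up to rotation/colour swap this is
   the general case; alternation around the closing vertex forces m even). *)
Definition alternating_cycle (T : finType) (red blue : rel T) (c : seq T) : bool :=
  if c is x0 :: _ then
    let m := size c in
    [&& uniq c, 3 <= m, ~~ odd m &
        all (fun i => let x := nth x0 c i in
                      let y := nth x0 c (i.+1 %% m) in
                      if odd i then blue x y else red x y) (iota 0 m)]
  else false.

From mathcomp Require Import all_boot.
Set Implicit Arguments. Unset Strict Implicit. Unset Printing Implicit Defensive.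

(* For a vertex set A, orient the graph as follows: from a vertex of A follow
   the red edges leaving A, from a vertex outside A follow the blue edges
   entering A.  If for some A no vertex is a sink, choosing one out-arc per
   vertex gives a map f : V -> V; a periodic point of f in A generates an
   f-cycle which crosses between A and its complement at every step, hence
   uses red and blue edges alternately: an alternating cycle.
   Such an A exists by double counting the pairs (A, v) with v a sink of A.
   For a fixed v, v is a sink only if A contains v and its red neighbours,
   or avoids v and its blue neighbours; by the degree bound there are at
   most 2^n / n such A, so at most 2^n pairs overall.  If every A had a sink,
   the 2^n - 1 sets A <> V would give one pair each and A = V would give n
   pairs, which is more than 2^n as n >= 2. *)

Lemma card_supersets (T : finType) (S : {set T}) :
  #|[set A : {set T} | S \subset A]| * 2 ^ #|S| = 2 ^ #|T|.
Proof.
have -> : [set A : {set T} | S \subset A] = @setC T @: powerset (~: S).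
  apply/setP=> A; rewrite inE; apply/idP/imsetP=> [sSA|[B]].
    by exists (~: A); rewrite ?setCK // powersetE setCS.
  by rewrite powersetE => sBS ->; rewrite -setCS setCK.
rewrite card_imset; last exact: setC_inj.
by rewrite card_powerset -expnD addnC cardsC.
Qed.

Lemma few_supersets (T : finType) (S : {set T}) (d : nat) :
  #|T| <= 2 ^ d -> #|S| = d.+1 ->
  2 * (#|T| * #|[set A : {set T} | S \subset A]|) <= 2 ^ #|T|.
Proof.
move=> le_T_2d card_S; rewrite -(card_supersets S) card_S expnS.
by rewrite mulnA mulnC !leq_mul2l le_T_2d !orbT.
Qed.

Lemma double_counting (I J : finType) (P : I -> J -> bool) :
  \sum_i #|[set j | P i j]| = \sum_j #|[set i | P i j]|.
Proof.
under eq_bigr do rewrite -sum1dep_card big_mkcond /=.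
under [RHS]eq_bigr do rewrite -sum1dep_card big_mkcond /=.
exact: exchange_big.
Qed.

Lemma periodic_point (T : finType) (f : T -> T) (x : T) :
  exists z, exists k, iter k.+1 f z = z.
Proof.
case/trajectP: (looping_order f x) => i lt_i_order eq_iter.
exists (iter i f x), (order f x - i.+1).
by rewrite -iterD addSnnS subnK // -eq_iter.
Qed.

Section SinkOrientation.

Variables (T : finType) (red blue : rel T).

Definition arc (A : {set T}) (v w : T) : bool :=
  if v \in A then red v w && (w \notin A) else blue v w && (w \in A).

Definition sink (A : {set T}) (v : T) : bool := [forall w, ~~ arc A v w].

Lemma arc_switches_side A v w : arc A v w -> (w \in A) = (v \notin A).
Proof. by rewrite /arc; case: (v \in A) => /andP[_] // /negbTE. Qed.

Lemma sinkE A v :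
  sink A v = if v \in A then [set u | red v u] \subset A
             else [set u | blue v u] \subset ~: A.
Proof.
apply/forallP/idP; rewrite /arc.
  by case: (v \in A) => no_arc; apply/subsetP=> u;
    rewrite !inE => vu; move: (no_arc u); rewrite vu // negbK.
case: (v \in A) => /subsetP sub u; apply/negP=> /andP[vu];
  by have := sub u; rewrite !inE vu => /(_ isT); case: (u \in A).
Qed.

(* For A = V there are no arcs at all, so every vertex is a sink. *)
Lemma sink_setT v : sink [set: T] v.
Proof. by rewrite sinkE in_setT subsetT. Qed.

(* A vertex of large red and blue degree is a sink for at most 2^n / n sets:
   they contain its closed red neighbourhood or avoid its closed blue one. *)
Lemma few_sink_sets v :
  irreflexive red -> irreflexive blue ->
  #|T| <= 2 ^ degR red v -> #|T| <= 2 ^ degB blue v ->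
  #|T| * #|[set A : {set T} | sink A v]| <= 2 ^ #|T|.
Proof.
move=> irr_red irr_blue le_red le_blue.
set SR := v |: [set u | red v u]; set SB := v |: [set u | blue v u].
have card_SR : #|SR| = (degR red v).+1 by rewrite cardsU1 inE irr_red.
have card_SB : #|SB| = (degB blue v).+1 by rewrite cardsU1 inE irr_blue.
have cover : [set A : {set T} | sink A v] \subset
    [set A : {set T} | SR \subset A] :|: (@setC T @: [set A : {set T} | SB \subset A]).
  apply/subsetP=> A; rewrite !inE sinkE; case: ifP => vA sub.
    by rewrite subUset sub1set vA sub.
  apply/orP; right; apply/imsetP; exists (~: A); rewrite ?setCK //.
  by rewrite inE subUset sub1set inE vA sub.
have := leq_trans (subset_leq_card cover) (leq_card_setU _ _).
rewrite card_imset; last exact: setC_inj.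
move/(leq_mul (leqnn #|T|)) /leq_trans; apply.
rewrite -(leq_pmul2l (isT : 0 < 2)) mulnDr mulnDr [in X in _ <= X]mul2n -addnn.
exact: leq_add (few_supersets le_red card_SR) (few_supersets le_blue card_SB).
Qed.

Lemma sink_count_upper :
  irreflexive red -> irreflexive blue -> 0 < #|T| ->
  (forall v, #|T| <= 2 ^ degR red v /\ #|T| <= 2 ^ degB blue v) ->
  \sum_(A : {set T}) #|[set v | sink A v]| <= 2 ^ #|T|.
Proof.
move=> irr_red irr_blue T_gt0 deg.
rewrite double_counting -(leq_pmul2l T_gt0) big_distrr /=.
rewrite -sum_nat_const; apply: leq_sum => v _.
by have [le_red le_blue] := deg v; apply: few_sink_sets.
Qed.

(* Lower bound when every set has a sink: V contributes all n vertices and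
   each of the 2^n - 1 other sets contributes at least one. *)
Lemma sink_count_lower :
  (forall A, exists v, sink A v) ->
  2 ^ #|T| + #|T|.-1 <= \sum_(A : {set T}) #|[set v | sink A v]|.
Proof.
move=> has_sink.
have all_sinks : [set v | sink setT v] = setT.
  by apply/setP=> v; rewrite !inE sink_setT.
have others : (2 ^ #|T|).-1 <= \sum_(A | A != setT) #|[set v | sink A v]|.
  have card_sets : #|{set T}| = 2 ^ #|T|.
    by have := card_powerset [set: T]; rewrite powersetT !cardsT.
  rewrite -card_sets -(cardC1 [set: T]) -sum1_card; apply: leq_sum => A _.
  by case: (has_sink A) => v sink_v; apply/card_gt0P; exists v; rewrite inE.
have pos : 0 < 2 ^ #|T| by rewrite expn_gt0.
rewrite (bigD1 setT) //= all_sinks cardsT.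
have T_gt0 : 0 < #|T| by case: (has_sink setT) => v _; apply/card_gt0P; exists v.
by rewrite -{1}(prednK pos) addSnnS prednK // addnC leq_add2l.
Qed.

(* The two bounds clash for n >= 2, so some orientation has no sink. *)
Lemma sinkless_set_exists :
  irreflexive red -> irreflexive blue -> 2 <= #|T| ->
  (forall v, #|T| <= 2 ^ degR red v /\ #|T| <= 2 ^ degB blue v) ->
  exists A, forall v, ~~ sink A v.
Proof.
move=> irr_red irr_blue T_ge2 deg.
have [/existsP[A /forallP no_sink] | ] :=
  boolP [exists A : {set T}, [forall v, ~~ sink A v]]; first by exists A.
rewrite negb_exists => /forallP every_has_sink; exfalso.
have has_sink A : exists v, sink A v.
  by move: (every_has_sink A); rewrite negb_forall => /existsP[v]; rewrite negbK; exists v.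
have := leq_trans (sink_count_lower has_sink)
  (sink_count_upper irr_red irr_blue (ltnW T_ge2) deg).
by rewrite -[X in _ <= X]addn0 leq_add2l leqn0 -subn1 subn_eq0 leqNgt T_ge2.
Qed.

Lemma successor_choice A :
  (forall v, ~~ sink A v) -> exists f : T -> T, forall v, arc A v (f v).
Proof.
move=> no_sink; exists (fun v => odflt v [pick w | arc A v w]) => v.
case: pickP => //= no_arc; case/negP: (no_sink v).
by apply/forallP=> w; rewrite no_arc.
Qed.

(* A successor map has a periodic point lying in A: a periodic point
   outside A is mapped into A, and its image is periodic as well. *)
Lemma periodic_point_in A (f : T -> T) (x : T) :
  (forall v, arc A v (f v)) -> exists2 z, z \in A & iter (order f z) f z = z.
Proof.
move=> arc_f; have [z [k periodic_z]] := periodic_point f x.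
have [zA | zNA] := boolP (z \in A).
  by exists z => //; apply/(orbitPcycle 3 4); exists k.
exists (f z); first by rewrite (arc_switches_side (arc_f z)).
apply/(orbitPcycle 3 4); exists k.
by rewrite -iterSr iterS periodic_z.
Qed.

(* The orbit of a periodic point z in A alternates between A and its
   complement, hence between red and blue edges; its length is even, and it
   is not 2 since an edge cannot carry both colours. *)
Lemma alternating_orbit A (f : T -> T) (z : T) :
  two_edge_coloured red blue -> (forall v, arc A v (f v)) ->
  z \in A -> iter (order f z) f z = z ->
  alternating_cycle red blue (orbit f z).
Proof.
case=> _ sym_blue _ _ disjoint arc_f zA periodic_z; set p := order f z.
have side i : (iter i f z \in A) = ~~ odd i.
  by elim: i => [|i IH] //=; rewrite (arc_switches_side (arc_f _)) IH negbK.
have edge i : if odd i then blue (iter i f z) (iter i.+1 f z)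
              else red (iter i f z) (iter i.+1 f z).
  by have := arc_f (iter i f z); rewrite /arc side; case: (odd i) => /andP[].
have p_even : ~~ odd p by rewrite -side periodic_z.
have p_ne2 : p != 2.
  apply/eqP=> p2; have red_zfz : red z (f z) := edge 0.
  have blue_fzz : blue (f z) (iter 2 f z) := edge 1.
  rewrite -p2 periodic_z in blue_fzz.
  by have := disjoint z (f z); rewrite red_zfz sym_blue blue_fzz.
have p_ge3 : 3 <= p.
  by move: (order_gt0 f z) p_even p_ne2; rewrite -/p; case: p => [|[|[|]]].
have orbit_cons : orbit f z = z :: traject f (f z) p.-1.
  by rewrite /orbit /p -(orderSpred f z).
rewrite /alternating_cycle orbit_cons -orbit_cons orbit_uniq size_orbit.
rewrite p_ge3 p_even /=; apply/allP=> i; rewrite mem_iota => /andP[_ lt_i_p].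
rewrite add0n in lt_i_p; rewrite /orbit !nth_traject ?ltn_pmod //.
suff -> : iter (i.+1 %% order f z) f z = iter i.+1 f z by apply: edge.
have [lt_Si_p | ge_Si_p] := ltnP i.+1 p; first by rewrite modn_small.
have Si_p : i.+1 = order f z by apply/eqP; rewrite eqn_leq lt_i_p ge_Si_p.
by rewrite {1}Si_p modnn Si_p periodic_z.
Qed.

End SinkOrientation.

Theorem corollary2p2 (T : finType) (red blue : rel T) :
  two_edge_coloured red blue ->
  2 <= #|T| ->
  (forall v : T, #|T| <= 2 ^ degR red v /\ #|T| <= 2 ^ degB blue v) ->
  exists c : seq T, alternating_cycle red blue c.
Proof.
move=> coloured T_ge2 deg; have [_ _ irr_red irr_blue _] := coloured.
case/card_gt0P: (ltnW T_ge2) => x _.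
have [A no_sink] := sinkless_set_exists irr_red irr_blue T_ge2 deg.
have [f arc_f] := successor_choice no_sink.
have [z zA periodic_z] := periodic_point_in x arc_f.
by exists (orbit f z); apply: alternating_orbit arc_f zA periodic_z.
Qed.
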